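(* Let $r(x)$ and $s(x)$ be $\Sigma_m$-terms whose only variable (if any) is $x$, interpreted in $Q_0$. If $r(q)=s(q)$ for infinitely many rationals $q$, then $r(q)\neq s(q)$ for only finitely many rationals $q$.
   Context: $\Sigma_m=(0,1,+,\cdot,-,{}^{-1})$. $Q_0$ is the field of rational numbers with its usual $0,1,+,\cdot,-$ and with the total inverse defined by $q^{-1}=1/q$ for $q\neq 0$ and $0^{-1}=0$. (In the paper: $r\equiv_\infty s$ means agreement at infinitely many rationals, $r\equiv_{ae} s$ means disagreement at only finitely many rationals, and the claim is $r\equiv_\infty s\Rightarrow r\equiv_{ae} s$.) *)

From HB Require Import structures.
From mathcomp Require Import all_boot all_order all_algebra.
Set Implicit Arguments. Unset Strict Implicit. Unset Printing Implicit Defensive.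
Import Order.TTheory GRing.Theory Num.Theory.
Local Open Scope ring_scope.

(* Sigma_m = (0,1,+,*,-,^-1) terms in at most one variable x. *)
Inductive term : Type :=
  | tX : term
  | tZero : term
  | tOne : term
  | tAdd : term -> term -> term
  | tMul : term -> term -> term
  | tNeg : term -> term
  | tInv : term -> term.

(* total inverse on Q: q^-1 = 1/q for q <> 0, 0^-1 = 0 *)
Definition inv0 (q : rat) : rat := if q == 0 then 0 else 1 / q.

Fixpoint eval (t : term) (q : rat) : rat :=
  match t with
  | tX => q
  | tZero => 0
  | tOne => 1
  | tAdd a b => eval a q + eval b q
  | tMul a b => eval a q * eval b q
  | tNeg a => - eval a q
  | tInv a => inv0 (eval a q)
  end.

Definition finite_rat (P : rat -> Prop) : Prop :=
  exists l : seq rat, forall q, P q -> q \in l.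

From Pilot Require Import Defs.
From mathcomp Require Import all_boot all_order all_algebra.
From Stdlib Require Import Classical.
Set Implicit Arguments. Unset Strict Implicit. Unset Printing Implicit Defensive.
Import Order.TTheory GRing.Theory Num.Theory.
Local Open Scope ring_scope.

(* Every term t(x) denotes, outside finitely many rationals,
   a rational function p(x)/q(x) with q(x) <> 0 (induction on t; for the
   total inverse one swaps numerator and denominator, discarding the
   finitely many roots of the numerator, or uses the constant 0 when the
   numerator is the zero polynomial).  Two such quotients p1/q1 and p2/q2
   agree exactly at the roots of the cross difference D = p1*q2 - p2*q1.
   If D = 0 the terms agree almost everywhere; otherwise they agree only
   at finitely many points, since a nonzero polynomial has finitely many
   roots. *)

Definition ae (P : rat -> Prop) : Prop :=
  exists l : seq rat, forall x, x \notin l -> P x.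

Lemma aeI (P Q : rat -> Prop) : ae P -> ae Q -> ae (fun x => P x /\ Q x).
Proof.
move=> [l1 H1] [l2 H2]; exists (l1 ++ l2) => x.
by rewrite mem_cat negb_or => /andP[/H1 ? /H2 ?].
Qed.

Lemma ae_impl (P Q : rat -> Prop) : ae P -> (forall x, P x -> Q x) -> ae Q.
Proof. by move=> [l H] PQ; exists l => x /H /PQ. Qed.

Lemma ae_finite_compl (P : rat -> Prop) :
  ae P -> finite_rat (fun x => ~ P x).
Proof. by move=> [l H]; exists l => x nPx; apply/negPn/negP => /H. Qed.

Lemma ae_excl_finite (P Q : rat -> Prop) :
  ae P -> (forall x, P x -> ~ Q x) -> finite_rat Q.
Proof.
move=> [l H] PnQ; exists l => x Qx; apply/negPn/negP => /H Px.
exact: PnQ Px Qx.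
Qed.

(* A nonzero polynomial over an integral domain has finitely many roots:
   split off one linear factor at a time. *)
Lemma poly_roots_finite (R : idomainType) (p : {poly R}) :
  p != 0 -> exists l : seq R, forall x, root p x -> x \in l.
Proof.
move: {2}(size p) (leqnn (size p)) => n.
elim: n p => [|n IH] p size_p p_neq0.
  by move: p_neq0 size_p; rewrite -size_poly_eq0 leqn0 => /negbTE ->.
have [[a pa] | no_root] := classic (exists a, root p a); last first.
  by exists [::] => x px; case: no_root; exists x.
have [q def_p] := factor_theorem _ _ pa.
have q_neq0 : q != 0 by apply: contraNneq p_neq0 => q0; rewrite def_p q0 mul0r.
have size_q : (size q <= n)%N.
  by move: size_p; rewrite def_p size_mul ?polyXsubC_eq0 // size_XsubC addn2.
have [l Hl] := IH q size_q q_neq0.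
exists (a :: l) => x; rewrite def_p rootM root_XsubC in_cons.
by case/orP => [/Hl ->|->]; rewrite ?orbT.
Qed.

Lemma ae_nonroot (p : {poly rat}) : p != 0 -> ae (fun x => p.[x] != 0).
Proof.
move=> /poly_roots_finite[l Hl]; exists l => x.
by apply: contraNneq => px; apply: Hl; apply/eqP.
Qed.

Definition rat_rep (t : term) (p q : {poly rat}) : Prop :=
  ae (fun x => q.[x] != 0 /\ eval t x = p.[x] / q.[x]).

Lemma term_rat_rep (t : term) : exists p q, rat_rep t p q.
Proof.
have const c : exists p q, ae (fun x => q.[x] != 0 /\ c = p.[x] / q.[x]).
  exists c%:P, 1; exists [::] => x _.
  by rewrite !hornerC divr1 oner_neq0.
rewrite /rat_rep; elim: t => /=.
- exists 'X, 1; exists [::] => x _.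
  by rewrite hornerX hornerC divr1 oner_neq0.
- exact: const.
- exact: const.
- move=> a [p1 [q1 H1]] b [p2 [q2 H2]].
  exists (p1 * q2 + p2 * q1), (q1 * q2); apply: (ae_impl (aeI H1 H2)).
  move=> x [[n1 ->] [n2 ->]].
  by rewrite hornerD !hornerM mulf_neq0 // addf_div.
- move=> a [p1 [q1 H1]] b [p2 [q2 H2]].
  exists (p1 * p2), (q1 * q2); apply: (ae_impl (aeI H1 H2)).
  move=> x [[n1 ->] [n2 ->]].
  by rewrite !hornerM mulf_neq0 // mulf_div.
- move=> a [p1 [q1 H1]]; exists (- p1), q1; apply: (ae_impl H1).
  by move=> x [n1 ->]; rewrite hornerN mulNr.
- (* Total inverse: 0 if the numerator is the zero polynomial, otherwise
     the reciprocal quotient, away from the roots of the numerator. *)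
  move=> a [p1 [q1 H1]].
  have [p1_0 | p1_neq0] := eqVneq p1 0.
    exists 0, 1; apply: (ae_impl H1) => x [_ ->].
    by rewrite p1_0 !horner0 hornerC !mul0r /Defs.inv0 eqxx oner_neq0.
  exists q1, p1; apply: (ae_impl (aeI H1 (ae_nonroot p1_neq0))).
  move=> x [[n1 ->] px]; split=> //.
  by rewrite /Defs.inv0 mulf_eq0 invr_eq0 (negbTE px) (negbTE n1) div1r invf_div.
Qed.

Lemma div_eq_cross (p1 q1 p2 q2 : {poly rat}) (x : rat) :
  q1.[x] != 0 -> q2.[x] != 0 ->
  (p1.[x] / q1.[x] = p2.[x] / q2.[x]) <-> root (p1 * q2 - p2 * q1) x.
Proof.
move=> n1 n2; rewrite rootE !hornerE subr_eq0 -eqr_div //.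
exact: (rwP eqP).
Qed.

Theorem theorem3 (r s : term) :
  ~ finite_rat (fun q => eval r q = eval s q) ->
  finite_rat (fun q => eval r q <> eval s q).
Proof.
move=> agree_infinite.
have [p1 [q1 Hr]] := term_rat_rep r; have [p2 [q2 Hs]] := term_rat_rep s.
have [D0 | D_neq0] := eqVneq (p1 * q2 - p2 * q1) 0.
  apply: ae_finite_compl; apply: (ae_impl (aeI Hr Hs)).
  move=> x [[n1 ->] [n2 ->]]; apply/(div_eq_cross _ _ n1 n2).
  by rewrite D0 root0.
case: agree_infinite; apply: ae_excl_finite (aeI (aeI Hr Hs) (ae_nonroot D_neq0)) _.
move=> x [[[n1 ->] [n2 ->]] Dx] /(div_eq_cross _ _ n1 n2) /eqP.
exact/eqP.
Qed.
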